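(* Let $\mathbf x=(k,S,\Lambda,\mathbf a)$ be an abelian group $k$-parameter and $G=G_{\mathbf x}$. If $U\subseteq{}^\omega S$ and $u\subseteq{}^\omega S\setminus U$ is finite, then $G_{U,u}\subseteq G_{U\cup u}$, and moreover $G_{U,u}$ is a pure subgroup of $G_{U\cup u}$ and $G_{U\cup u}$ is a pure subgroup of $G$.
   Context: For a set $S$, ${}^\omega S$ is the set of all functions $\omega\to S$. An abelian group $k$-parameter is $\mathbf x=(k,S,\Lambda,\mathbf a)$ with $k<\omega$, $S$ a set, $\Lambda\subseteq {}^{k+1}({}^\omega S)$ (sequences $\bar\eta=\langle\eta_0,\dots,\eta_k\rangle$, $\eta_\ell\in{}^\omega S$) and $\mathbf a:\Lambda\times\omega\to\mathbb Z$, $\mathbf a_{\bar\eta,n}=\mathbf a(\bar\eta,n)$. For $\bar\eta\in\Lambda$, $m\le k$, $n<\omega$, $\bar\eta\upharpoonleft\langle m,n\rangle$ is the sequence obtained from $\bar\eta$ by replacing $\eta_m$ with $\eta_m\restriction n$. $\Lambda_m=\{\bar\eta\upharpoonleft\langle m,n\rangle:\bar\eta\in\Lambda,n<\omega\}$, $\Lambda_{\le k}=\bigcup_{m\le k}\Lambda_m$. $G_{\mathbf x}$ is the abelian group generated by $z$, $x_{\bar\nu}$ ($\bar\nu\in\Lambda_{\le k}$), $y_{\bar\eta,n}$ ($\bar\eta\in\Lambda,n<\omega$) freely except for the relations $(n!)y_{\bar\eta,n+1}=y_{\bar\eta,n}+\mathbf a_{\bar\eta,n}z+\sum_{m\le k}x_{\bar\eta\upharpoonleft\langle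 m,n\rangle}$ ($\bar\eta\in\Lambda$, $n<\omega$). For $U\subseteq{}^\omega S$, $G_U$ is the subgroup of $G_{\mathbf x}$ generated by $\{z\}\cup\{y_{\bar\eta,n}:\bar\eta\in\Lambda\cap{}^{k+1}U,n<\omega\}\cup\{x_{\bar\eta\upharpoonleft\langle m,n\rangle}:\bar\eta\in\Lambda\cap{}^{k+1}U,m\le k,n<\omega\}$. For $U\subseteq{}^\omega S$ and finite $u\subseteq{}^\omega S$, $G_{U,u}$ is the subgroup of $G_{\mathbf x}$ generated by $\bigcup_{\eta\in u}G_{U\cup(u\setminus\{\eta\})}$ (so $G_{U,\emptyset}=\{0\}$). A subgroup $H\subseteq K$ is pure if $na\in H$, $a\in K$, $0\neq n\in\mathbb Z$ imply $a\in H$. *)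

From mathcomp Require Import all_boot all_algebra.
From Stdlib Require List.
From Stdlib Require Import ClassicalEpsilon.
Set Implicit Arguments. Unset Strict Implicit. Unset Printing Implicit Defensive.
Import GRing.Theory Num.Theory.
Local Open Scope ring_scope.

Section AbGroupParam.
Variables (k : nat) (S : Type).

Definition omseq := nat -> S.
Definition tup := 'I_k.+1 -> omseq.
(* elements of Lambda_{<=k}: tuples whose coordinates are either infinite
   sequences or finite sequences (eta restricted to n is  mkseq eta n). *)
Definition ptup := 'I_k.+1 -> (omseq + seq S)%type.

Definition restr (eta : tup) (m : 'I_k.+1) (n : nat) : ptup :=
  fun i => if i == m then inr (mkseq (eta i) n) else inl (eta i).

Inductive gen : Type :=
| Gz : gen
| Gx : ptup -> gen
| Gy : tup -> nat -> gen.

(* elements of the free abelian group on gen: functions gen -> int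
   (those actually arising are finitely supported, being Z-combinations
   of indicator functions) *)
Definition fgrp := gen -> int.

Definition ind (g : gen) : fgrp :=
  fun h => if excluded_middle_informative (h = g) then 1 else 0.

Definition fzero : fgrp := fun _ => 0.
Definition fsub (f g : fgrp) : fgrp := fun h => f h - g h.
Definition fscale (n : int) (f : fgrp) : fgrp := fun h => n * f h.

Inductive span (X : fgrp -> Prop) : fgrp -> Prop :=
| span0 : span X fzero
| span_in f : X f -> span X f
| span_sub f g : span X f -> span X g -> span X (fsub f g).

Variables (Lam : tup -> Prop) (a : tup -> nat -> int).

Definition is_gen (g : gen) : Prop :=
  g = Gz \/
  (exists eta m n, Lam eta /\ g = Gx (restr eta m n)) \/
  (exists eta n, Lam eta /\ g = Gy eta n).

Definition relvec (eta : tup) (n : nat) : fgrp :=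
  fun h => ((n`!)%:Z * ind (Gy eta n.+1) h - ind (Gy eta n) h
            - a eta n * ind Gz h
            - \sum_(m < k.+1) ind (Gx (restr eta m n)) h).

Definition is_rel (f : fgrp) : Prop :=
  exists eta n, Lam eta /\ f = relvec eta n.

(* the relation subgroup R; G_x = F / R *)
Definition Rel : fgrp -> Prop := span is_rel.

(* Subgroups of G_x are represented by their preimage in the free group:
   gsub X is the (preimage of the) subgroup of G_x generated by the images
   of the elements of X. *)
Definition gsub (X : fgrp -> Prop) (f : fgrp) : Prop :=
  exists h, span X h /\ Rel (fsub f h).

Definition Gfull : fgrp -> Prop :=
  gsub (fun f => exists g, is_gen g /\ f = ind g).

Definition genU (U : omseq -> Prop) (g : gen) : Prop :=
  g = Gz \/
  (exists eta m n, Lam eta /\ (forall i, U (eta i)) /\ g = Gx (restr eta m n)) \/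
  (exists eta n, Lam eta /\ (forall i, U (eta i)) /\ g = Gy eta n).

Definition GU (U : omseq -> Prop) : fgrp -> Prop :=
  gsub (fun f => exists g, genU U g /\ f = ind g).

Definition GUu (U : omseq -> Prop) (u : list omseq) : fgrp -> Prop :=
  gsub (fun f => exists eta, List.In eta u /\
          GU (fun xi => U xi \/ (List.In xi u /\ xi <> eta)) f).

Definition subgrp (H K : fgrp -> Prop) : Prop := forall f, H f -> K f.

Definition pure (H K : fgrp -> Prop) : Prop :=
  forall f, K f -> forall n : int, n != 0 -> H (fscale n f) -> H f.

End AbGroupParam.

(* Each relation n! y_{eta,n+1} = y_{eta,n} + a z + sum x lets one rewrite
   y_{eta,n} in terms of y_{eta,n+1}.  Rewriting every y_{eta,n} with n < N in
   terms of y_{eta,N} defines a map rho_N ([retract N]) on formal combinations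
   of generators that is the identity modulo the relations, kills the
   relations with index below N, and sends the generators of G_U into their
   own span.  If m f lies in G_U, write f = h + r and m f = h' + r' with r, r'
   combinations of finitely many relations; for N large, applying rho_N gives
   m rho_N(h) = rho_N(h') in the free abelian group.  The right side is
   supported on generators of G_U and free abelian groups are torsion free, so
   rho_N(h) lies in the span of those generators, and it represents f.
   G_{U,u} is generated by a union of such generator sets, so the same
   argument applies to it. *)
From Pilot Require Import Defs.
From mathcomp Require Import all_boot all_algebra.
From mathcomp Require Import ring.
From Stdlib Require List.
From Stdlib Require Import ClassicalEpsilon FunctionalExtensionality.
(* Re-imported so that [span] is not shadowed by the one of [vector]. *)
Import Pilot.Defs.
Set Implicit Arguments. Unset Strict Implicit. Unset Printing Implicit Defensive.
Import GRing.Theory Num.Theory.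
Local Open Scope ring_scope.

Section FreeAbelianGroup.
Variables (k : nat) (S : Type).
Local Notation gen := (gen k S).
Local Notation fgrp := (fgrp k S).
Local Notation ind := (@ind k S).

Definition lsum (F : gen -> fgrp) (l : seq (int * gen)) : fgrp :=
  fun h => \sum_(p <- l) p.1 * F p.2 h.

Definition lscale (c : int) (l : seq (int * gen)) : seq (int * gen) :=
  map (fun p => (c * p.1, p.2)) l.

Fixpoint all_gen (P : gen -> Prop) (l : seq (int * gen)) : Prop :=
  if l is p :: l' then P p.2 /\ all_gen P l' else True.

Definition genset (P : gen -> Prop) (f : fgrp) : Prop := exists g, P g /\ f = ind g.

Lemma lsum_nil F h : lsum F [::] h = 0.
Proof. by rewrite /lsum big_nil. Qed.

Lemma lsum_cons F c g l h : lsum F ((c, g) :: l) h = c * F g h + lsum F l h.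
Proof. by rewrite /lsum big_cons. Qed.

Lemma lsum_cat F l1 l2 h : lsum F (l1 ++ l2) h = lsum F l1 h + lsum F l2 h.
Proof. by rewrite /lsum big_cat. Qed.

Lemma lsum_scale F c l h : lsum F (lscale c l) h = c * lsum F l h.
Proof. by rewrite /lsum big_map mulr_sumr; apply: eq_bigr => p _ /=; rewrite mulrA. Qed.

Lemma ind_id (g : gen) : ind g g = 1.
Proof. by rewrite /ind; case: excluded_middle_informative. Qed.

Lemma ind_neq (g h : gen) : h <> g -> ind g h = 0.
Proof. by rewrite /ind; case: excluded_middle_informative. Qed.

Lemma all_gen_cat P l1 l2 : all_gen P l1 -> all_gen P l2 -> all_gen P (l1 ++ l2).
Proof. by elim: l1 => //= p l IH [Pp Pl] Pl2; split => //; apply: IH. Qed.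

Lemma all_gen_scale P c l : all_gen P l -> all_gen P (lscale c l).
Proof. by elim: l => //= p l IH [Pp Pl]; split => //; apply: IH. Qed.

Lemma all_gen_impl (P Q : gen -> Prop) l :
  (forall g, P g -> Q g) -> all_gen P l -> all_gen Q l.
Proof. by move=> PQ; elim: l => //= p l IH [Pp Pl]; split; [apply: PQ | apply: IH]. Qed.

Lemma lsum_ind_neq0 P l h : all_gen P l -> lsum ind l h <> 0 -> P h.
Proof.
elim: l => [|[c g] l IH] /=; first by rewrite lsum_nil.
move=> [Pg Pl]; rewrite lsum_cons.
case: (excluded_middle_informative (h = g)) => [-> // | ne].
by rewrite ind_neq // mulr0 add0r; apply: IH.
Qed.

(* Induction on the length: the total coefficient of the first generator of [l]
   must vanish, and the remaining terms form a shorter combination. *)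
Lemma lsum_ind_eq0 l : (forall h, lsum ind l h = 0) -> forall F h, lsum F l h = 0.
Proof.
elim: {l}_.+1 {-2}l (ltnSn (size l)) => // n IH [|[c g] l] /= size_l l0 F h.
  by rewrite lsum_nil.
pose is_g (p : int * gen) := if excluded_middle_informative (p.2 = g) then true else false.
have split_g (G : gen -> fgrp) x : lsum G ((c, g) :: l) x =
    (c + \sum_(p <- l | is_g p) p.1) * G g x + lsum G (filter (predC is_g) l) x.
  rewrite lsum_cons /lsum big_filter (bigID is_g) /= addrA mulrDl.
  congr (_ + _ + _); rewrite mulr_suml; apply: eq_bigr => p.
  by rewrite /is_g; case: excluded_middle_informative => // pg _; rewrite pg.
have coef_g0 : c + \sum_(p <- l | is_g p) p.1 = 0.
  have := l0 g; rewrite split_g ind_id mulr1 /lsum big_filter.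
  rewrite [X in _ + X]big1 ?addr0 // => p.
  rewrite /is_g /=; case: excluded_middle_informative => // ne _.
  by rewrite ind_neq ?mulr0 // => e; apply: ne.
rewrite split_g coef_g0 mul0r add0r; apply: IH.
  by rewrite size_filter (leq_ltn_trans (count_size _ _)).
by move=> x; have := l0 x; rewrite split_g coef_g0 mul0r add0r.
Qed.

Lemma lsum_ind_ext (l1 l2 : seq (int * gen)) :
  (forall h, lsum ind l1 h = lsum ind l2 h) -> forall F h, lsum F l1 h = lsum F l2 h.
Proof.
move=> E F h; apply/eqP; rewrite -subr_eq0; apply/eqP.
have := @lsum_ind_eq0 (l1 ++ lscale (-1) l2) _ F h.
rewrite lsum_cat lsum_scale mulN1r; apply=> x.
by rewrite lsum_cat lsum_scale mulN1r E subrr.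
Qed.

Lemma span_ext X (f g : fgrp) : span X f -> (forall h, f h = g h) -> span X g.
Proof. by move=> sf E; rewrite -(functional_extensionality f g E). Qed.

Lemma span_add X (f g : fgrp) : span X f -> span X g -> span X (fun h => f h + g h).
Proof.
move=> sf sg; apply: span_ext (span_sub sf (span_sub (span0 X) sg)) _ => h.
by rewrite /fsub /fzero sub0r opprK.
Qed.

Lemma span_scale X (f : fgrp) c : span X f -> span X (fun h => c * f h).
Proof.
move=> sf.
have span_nat (n : nat) : span X (fun h => n%:Z * f h).
  elim: n => [|n IH]; first by apply: span_ext (span0 X) _ => h; rewrite mul0r.
  by apply: span_ext (span_add IH sf) _ => h; rewrite -addn1 PoszD mulrDl mul1r.
case: c => n; first exact: span_nat.
apply: span_ext (span_sub (span0 X) (span_nat n.+1)) _ => h.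
by rewrite /fsub /fzero NegzE sub0r mulNr.
Qed.

Lemma span_impl (X Y : fgrp -> Prop) f : (forall g, X g -> Y g) -> span X f -> span Y f.
Proof.
move=> XY; elim=> [|g Xg|g1 g2 _ IH1 _ IH2]; first exact: span0.
  by apply: span_in; apply: XY.
exact: span_sub IH1 IH2.
Qed.

Lemma span_lsum X F l : all_gen (fun g => span X (F g)) l -> span X (lsum F l).
Proof.
elim: l => [|[c g] l IH] /=.
  by move=> _; apply: span_ext (span0 _) _ => h; rewrite lsum_nil.
move=> [Fg Fl]; apply: span_ext (span_add (span_scale c Fg) (IH Fl)) _ => h.
by rewrite lsum_cons.
Qed.

Lemma span_genset_lsum P l : all_gen P l -> span (genset P) (lsum ind l).
Proof.
by move=> Pl; apply: span_lsum; apply: all_gen_impl Pl => g Pg; apply: span_in; exists g.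
Qed.

Lemma span_gensetP P f : span (genset P) f ->
  exists l, all_gen P l /\ forall h, f h = lsum ind l h.
Proof.
elim=> [|g [g0 [Pg ->]]|f1 f2 _ [l1 [P1 E1]] _ [l2 [P2 E2]]].
- by exists [::]; split => // h; rewrite lsum_nil.
- by exists [:: (1, g0)]; split => // h; rewrite lsum_cons lsum_nil mul1r addr0.
- exists (l1 ++ lscale (-1) l2); split; first by apply: all_gen_cat => //; apply: all_gen_scale.
  by move=> h; rewrite lsum_cat lsum_scale /fsub E1 E2 mulN1r.
Qed.

Lemma span_genset_support P f l : (forall h, f h = lsum ind l h) ->
  (forall h, f h <> 0 -> P h) -> span (genset P) f.
Proof.
move=> E supp_f.
pose inP (p : int * gen) := if excluded_middle_informative (P p.2) then true else false.
suff E' h : f h = lsum ind (filter inP l) h.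
  apply: span_ext (span_genset_lsum (P := P) _) (fun h => esym (E' h)).
  by elim: l {E E'} => //= p l IH; rewrite /inP; case: excluded_middle_informative.
rewrite E /lsum big_filter (bigID inP) /=.
suff -> : \sum_(p <- l | ~~ inP p) p.1 * ind p.2 h = 0 by rewrite addr0.
case: (excluded_middle_informative (P h)) => Ph.
  rewrite big1 // => p; rewrite /inP; case: excluded_middle_informative => // nP _.
  by rewrite ind_neq ?mulr0 // => eh; apply: nP; rewrite -eh.
have f0 : f h = 0 by case: (excluded_middle_informative (f h = 0)) => // /supp_f.
move: f0; rewrite E /lsum (bigID inP) /= [X in X + _]big1 ?add0r // => p.
rewrite /inP; case: excluded_middle_informative => // Pp _.
by rewrite ind_neq ?mulr0 // => eh; apply: Ph; rewrite eh.
Qed.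

Lemma span_genset_pure P (f : fgrp) (n : int) : n != 0 ->
  span (genset (fun _ => True)) f -> span (genset P) (fscale n f) -> span (genset P) f.
Proof.
move=> nz /span_gensetP [l [_ El]] /span_gensetP [l' [Pl' El']].
apply: (span_genset_support El) => h fh.
apply: (lsum_ind_neq0 Pl'); rewrite -El' /fscale.
by apply/eqP; rewrite mulf_neq0 //; apply/eqP.
Qed.

End FreeAbelianGroup.

Section Retraction.
Variables (k : nat) (S : Type) (Lam : tup k S -> Prop) (a : tup k S -> nat -> int).
Local Notation gen := (gen k S).
Local Notation fgrp := (fgrp k S).
Local Notation ind := (@ind k S).
Local Notation Rel := (Rel Lam a).

Definition rel_tail (eta : tup k S) (n : nat) : seq (int * gen) :=
  (- a eta n, Gz k S) :: map (fun m => (-1, Gx (restr eta m n))) (index_enum 'I_k.+1).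

Definition rel_comb (eta : tup k S) (n : nat) : seq (int * gen) :=
  ((n`!)%:Z, Gy eta n.+1) :: (-1, Gy eta n) :: rel_tail eta n.

(* [y_lift d eta n] is y_{eta,n} rewritten, using d relations, in terms of
   y_{eta,n+d}, z and the x's. *)
Fixpoint y_lift (d : nat) (eta : tup k S) (n : nat) : fgrp :=
  if d is d'.+1 then fun h => (n`!)%:Z * y_lift d' eta n.+1 h + lsum ind (rel_tail eta n) h
  else ind (Gy eta n).

Definition retract (N : nat) (g : gen) : fgrp :=
  if g is Gy eta n then y_lift (N - n) eta n else ind g.

Lemma relvecE eta n h : relvec a eta n h = lsum ind (rel_comb eta n) h.
Proof.
rewrite /relvec /rel_comb /rel_tail !lsum_cons /lsum big_map.
under [in RHS]eq_bigr => m _ do rewrite /= mulN1r.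
rewrite sumrN; ring.
Qed.

Lemma retract_rel_tail N eta n h :
  lsum (retract N) (rel_tail eta n) h = lsum ind (rel_tail eta n) h.
Proof. by rewrite /rel_tail !lsum_cons /lsum !big_map. Qed.

Lemma retract_rel_comb N eta n h : (n < N)%N -> lsum (retract N) (rel_comb eta n) h = 0.
Proof.
move=> lt_nN; rewrite /rel_comb 2!lsum_cons retract_rel_tail /= -(subnSK lt_nN) /=.
ring.
Qed.

Lemma Rel_retract r : Rel r -> exists B l, (forall h, r h = lsum ind l h) /\
  forall N, (B <= N)%N -> forall h, lsum (retract N) l h = 0.
Proof.
elim=> [|f [eta [n [_ ->]]]|f1 f2 _ [B1 [l1 [E1 K1]]] _ [B2 [l2 [E2 K2]]]].
- by exists 0%N, [::]; split => *; rewrite lsum_nil.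
- exists n.+1, (rel_comb eta n); split; first exact: relvecE.
  by move=> N le h; apply: retract_rel_comb.
- exists (maxn B1 B2), (l1 ++ lscale (-1) l2); split.
    by move=> h; rewrite lsum_cat lsum_scale /fsub E1 E2 mulN1r.
  move=> N; rewrite geq_max => /andP [le1 le2] h.
  by rewrite lsum_cat lsum_scale K1 ?K2 ?mulr0 ?addr0.
Qed.

Lemma span_y_lift P eta : P (Gz k S) -> (forall m j, P (Gx (restr eta m j))) ->
  (forall j, P (Gy eta j)) -> forall d n, span (genset P) (y_lift d eta n).
Proof.
move=> Pz Px Py; elim=> [|d IH] n /=; first by apply: span_in; exists (Gy eta n).
apply: span_add (span_scale _ (IH _)) (span_genset_lsum _).
by split => //; elim: (index_enum _) => //= m s IHs; split.
Qed.

Lemma span_retract N g : span (genset (fun _ => True)) (retract N g).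
Proof.
case: g => [|p|eta n] /=; try by apply: span_in; eexists.
by apply: span_y_lift.
Qed.

Lemma Rel_sub_y_lift eta : Lam eta ->
  forall d n, Rel (fun h => ind (Gy eta n) h - y_lift d eta n h).
Proof.
move=> Leta; elim=> [|d IH] n /=; first by apply: span_ext (span0 _) _ => h; rewrite subrr.
have rel_n : is_rel Lam a (relvec a eta n) by exists eta, n.
apply: span_ext (span_sub (span_scale (n`!)%:Z (IH n.+1)) (span_in rel_n)) _ => h.
rewrite /fsub relvecE /rel_comb !lsum_cons; ring.
Qed.

Lemma Rel_sub_retract N g : is_gen Lam g -> Rel (fun h => ind g h - retract N g h).
Proof.
move=> [->|[[eta [m [n [_ ->]]]]|[eta [n [Leta ->]]]]] /=; last exact: Rel_sub_y_lift.
  by apply: span_ext (span0 _) _ => h; rewrite subrr.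
by apply: span_ext (span0 _) _ => h; rewrite subrr.
Qed.

Lemma Rel_sub_lsum_retract N l : all_gen (is_gen Lam) l ->
  Rel (fun h => lsum ind l h - lsum (retract N) l h).
Proof.
elim: l => [|[c g] l IH] /=.
  by move=> _; apply: span_ext (span0 _) _ => h; rewrite !lsum_nil subrr.
move=> [Gg Gl].
apply: span_ext (span_add (span_scale c (Rel_sub_retract N Gg)) (IH Gl)) _ => h.
rewrite !lsum_cons; ring.
Qed.

Lemma gsub_genset_pure P : (forall N g, P g -> span (genset P) (retract N g)) ->
  pure (gsub Lam a (genset P)) (Gfull Lam a).
Proof.
move=> retract_P f [h [sh rh]] n nz [h' [sh' rh']].
have [l [Gl El]] := span_gensetP sh.
have [l' [Pl' El']] := span_gensetP sh'.
have [B [lr [Er Kr]]] := Rel_retract rh.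
have [B' [lr' [Er' Kr']]] := Rel_retract rh'.
pose N := maxn B B'.
pose g := lsum (retract N) l.
have n_g x : fscale n g x = lsum (retract N) l' x.
  have := @lsum_ind_ext _ _ (lscale n (l ++ lr)) (l' ++ lr') _ (retract N) x.
  rewrite lsum_scale !lsum_cat Kr ?Kr' ?addr0 ?leq_maxr ?leq_maxl //; apply=> y.
  by rewrite lsum_scale !lsum_cat -El -El' -Er -Er' /fsub /fscale; ring.
exists g; split.
  apply: (span_genset_pure nz).
    by apply: span_lsum; apply: all_gen_impl Gl => x _; apply: span_retract.
  apply: span_ext (span_lsum (all_gen_impl (retract_P N) Pl')) _ => x.
  by rewrite n_g.
apply: span_ext (span_add rh (Rel_sub_lsum_retract N Gl)) _ => x.
by rewrite /fsub El /g; ring.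
Qed.

End Retraction.

Section Subgroups.
Variables (k : nat) (S : Type) (Lam : tup k S -> Prop) (a : tup k S -> nat -> int).
Local Notation fgrp := (fgrp k S).

Lemma Rel_fsubrr (f : fgrp) : Rel Lam a (fsub f f).
Proof. by apply: span_ext (span0 _) _ => x; rewrite /fsub subrr. Qed.

Lemma gsub_in X (f : fgrp) : X f -> gsub Lam a X f.
Proof. by move=> Xf; exists f; split; [apply: span_in | apply: Rel_fsubrr]. Qed.

Lemma gsub_closure (X Y : fgrp -> Prop) f :
  (forall g, X g -> gsub Lam a Y g) -> gsub Lam a X f -> gsub Lam a Y f.
Proof.
move=> XY [h [sh rh]].
have [h' [sh' rh']] : gsub Lam a Y h.
  elim: sh {rh} => [|g Xg|g1 g2 _ [h1 [s1 r1]] _ [h2 [s2 r2]]]; last 1 first.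
  - exists (fsub h1 h2); split; first exact: span_sub.
    by apply: span_ext (span_sub r1 r2) _ => x; rewrite /fsub; ring.
  - by exists (@fzero k S); split; [apply: span0 | apply: Rel_fsubrr].
  - exact: XY.
exists h'; split => //.
by apply: span_ext (span_add rh rh') _ => x; rewrite /fsub; ring.
Qed.

Lemma gsub_genset_impl (P Q : gen k S -> Prop) f : (forall g, P g -> Q g) ->
  gsub Lam a (genset P) f -> gsub Lam a (genset Q) f.
Proof.
move=> PQ; apply: gsub_closure => g [x [Px ->]].
by apply: gsub_in; exists x; split => //; apply: PQ.
Qed.

Lemma genU_impl (V W : omseq S -> Prop) g : (forall xi, V xi -> W xi) ->
  genU Lam V g -> genU Lam W g.
Proof.
move=> VW [->|[[eta [m [n [Leta [Veta ->]]]]]|[eta [n [Leta [Veta ->]]]]]].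
- by left.
- by right; left; exists eta, m, n; split => //; split => // i; apply: VW.
- by right; right; exists eta, n; split => //; split => // i; apply: VW.
Qed.

Lemma genU_is_gen V g : genU Lam V g -> is_gen Lam g.
Proof.
move=> [->|[[eta [m [n [Leta [_ ->]]]]]|[eta [n [Leta [_ ->]]]]]].
- by left.
- by right; left; exists eta, m, n.
- by right; right; exists eta, n.
Qed.

Lemma span_genU_retract V N g : genU Lam V g -> span (genset (genU Lam V)) (retract a N g).
Proof.
move=> Vg; case: (Vg) => [->|[[eta [m [n [Leta [Veta ->]]]]]|[eta [n [Leta [Veta ->]]]]]] /=.
- by apply: span_in; exists (Gz k S); split => //; left.
- by apply: span_in; exists (Gx (restr eta m n)); split => //; right; left; exists eta, m, n.
- apply: span_y_lift => [|m j|j]; first by left.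
  + by right; left; exists eta, m, j.
  + by right; right; exists eta, j.
Qed.

Lemma pure_subgrp (H K L : fgrp -> Prop) : subgrp K L -> pure H L -> pure H K.
Proof. by move=> KL pHL f /KL; apply: pHL. Qed.

End Subgroups.

Theorem claim1p10 (k : nat) (S : Type) (Lam : tup k S -> Prop)
  (a : tup k S -> nat -> int)
  (U : omseq S -> Prop) (u : list (omseq S))
  (hu : forall eta, List.In eta u -> ~ U eta) :
  let UUu := fun xi => U xi \/ List.In xi u in
  subgrp (GUu Lam a U u) (GU Lam a UUu) /\
  pure (GUu Lam a U u) (GU Lam a UUu) /\
  pure (GU Lam a UUu) (Gfull Lam a).
Proof.
move=> UUu.
pose V eta xi := U xi \/ (List.In xi u /\ xi <> eta).
pose genUu g := exists eta, List.In eta u /\ genU Lam (V eta) g.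
have GUuE f : GUu Lam a U u f <-> gsub Lam a (genset genUu) f.
  split; apply: gsub_closure.
    by move=> g [eta [u_eta GUg]]; apply: gsub_genset_impl GUg => x Vx; exists eta.
  move=> g [x [[eta [u_eta Vx]] ->]]; apply: gsub_in; exists eta; split => //.
  by apply: gsub_in; exists x.
have GU_full : subgrp (GU Lam a UUu) (Gfull Lam a).
  by move=> f; apply: gsub_genset_impl; apply: genU_is_gen.
have pure_GU_full : pure (GU Lam a UUu) (Gfull Lam a).
  by apply: gsub_genset_pure => N g; apply: span_genU_retract.
split; [|split] => //.
- move=> f /GUuE; apply: gsub_genset_impl => x [eta [_ Vx]].
  by apply: genU_impl Vx => xi [Uxi | [u_xi _]]; [left | right].
- apply: (pure_subgrp GU_full) => f Ff n nz /GUuE nf; apply/GUuE.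
  apply: (gsub_genset_pure _ Ff nz nf) => N g [eta [u_eta Vg]].
  by apply: span_impl (span_genU_retract a N Vg) => y [x [Vx ->]]; exists x; split => //; exists eta.
Qed.
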